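(* Let $X=[x_1,\dots,x_m]\in\mathbb{R}^{d_x\times m}$ be a data matrix and $Y\in\mathbb{R}^{d_y\times m}$ a label matrix, and let $\tilde X=\begin{bmatrix}X^T & \mathbf{1}_m\end{bmatrix}^T\in\mathbb{R}^{(d_x+1)\times m}$. For a function $h:\mathbb{R}\to\mathbb{R}$ applied entrywise, consider the empirical risk of the one-hidden-layer network $$\ell(W_1,W_2,b_1,b_2)=\tfrac12\big\|W_2\,h(W_1X+b_1\mathbf{1}_m^T)+b_2\mathbf{1}_m^T-Y\big\|_F^2,$$ with $W_1\in\mathbb{R}^{d_1\times d_x}$, $b_1\in\mathbb{R}^{d_1}$, $W_2\in\mathbb{R}^{d_y\times d_1}$, $b_2\in\mathbb{R}^{d_y}$. Suppose that: (1) $d_y=1$, and there is no matrix $R\in\mathbb{R}^{1\times(d_x+1)}$ with $Y=R\tilde X$; (2) the data points $x_1,\dots,x_m$ are pairwise distinct; (3) $h(x)=\max\{s_+x,0\}+\min\{s_-x,0\}$ for constants $s_+>0$, $s_-\ge 0$, $s_+\neq s_-$; (4) $d_1\ge 2$. Then $\ell$ has a local minimum that is not a global minimum (a spurious local minimum) whose risk equals the linear least squares risk $\min_{R\in\mathbb{R}^{1\times(d_x+1)}}\tfrac12\|R\tilde X-Y\|_F^2$. Moreover, there are infinitely many such local minima.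
   Context: $\mathbf{1}_m$ denotes the all-ones column vector in $\mathbb{R}^m$, and $\|\cdot\|_F$ the Frobenius norm. A spurious local minimum is a local minimum of $\ell$ at which $\ell$ is strictly larger than its infimum over all parameters. *)

From mathcomp Require Import all_boot all_order all_algebra.
From mathcomp Require Import reals.
Set Implicit Arguments. Unset Strict Implicit. Unset Printing Implicit Defensive.
Import Order.TTheory GRing.Theory Num.Theory.
Local Open Scope ring_scope.

Section Defs.
Variable R : realType.

Definition frob2 (p q : nat) (A : 'M[R]_(p, q)) : R :=
  \sum_(i < p) \sum_(j < q) (A i j) ^+ 2.

Definition leaky (sp sm : R) (x : R) : R :=
  Num.max (sp * x) 0 + Num.min (sm * x) 0.

Definition Xtilde (dx m : nat) (X : 'M[R]_(dx, m)) : 'M[R]_(dx + 1, m) :=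
  col_mx X (const_mx 1).

Definition params (dx d1 dy : nat) : Type :=
  ('M[R]_(d1, dx) * 'M[R]_(dy, d1) * 'cV[R]_d1 * 'cV[R]_dy)%type.

Definition risk (dx d1 dy m : nat) (h : R -> R)
    (X : 'M[R]_(dx, m)) (Y : 'M[R]_(dy, m)) (p : params dx d1 dy) : R :=
  let: (W1, W2, b1, b2) := p in
  2^-1 * frob2 (W2 *m map_mx h (W1 *m X + b1 *m const_mx 1)
                + b2 *m const_mx 1 - Y).

(* entrywise closeness of parameter tuples (defines the usual topology) *)
Definition mx_near (p q : nat) (eps : R) (A B : 'M[R]_(p, q)) : Prop :=
  forall i j, `|A i j - B i j| < eps.

Definition params_near (dx d1 dy : nat) (eps : R) (p q : params dx d1 dy) : Prop :=
  let: (A1, A2, a1, a2) := p in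
  let: (B1, B2, c1, c2) := q in
  [/\ mx_near eps A1 B1, mx_near eps A2 B2, mx_near eps a1 c1 & mx_near eps a2 c2].

Definition is_local_min (T : Type) (near : R -> T -> T -> Prop) (f : T -> R) (x : T) : Prop :=
  exists2 eps : R, 0 < eps & forall y, near eps x y -> f x <= f y.

Definition is_spurious_local_min (T : Type) (near : R -> T -> T -> Prop)
    (f : T -> R) (x : T) : Prop :=
  is_local_min near f x /\ exists y, f y < f x.

Definition is_lsq_min (dx dy m : nat) (X : 'M[R]_(dx, m)) (Y : 'M[R]_(dy, m)) (v : R) : Prop :=
  (forall Rm : 'M[R]_(dy, dx + 1), v <= 2^-1 * frob2 (Rm *m Xtilde X - Y)) /\
  (exists Rm : 'M[R]_(dy, dx + 1), v = 2^-1 * frob2 (Rm *m Xtilde X - Y)).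

End Defs.

From mathcomp Require Import all_boot all_order all_algebra.
From mathcomp Require Import reals ring lra.
Set Implicit Arguments. Unset Strict Implicit. Unset Printing Implicit Defensive.
Import Order.TTheory GRing.Theory Num.Theory.
Local Open Scope ring_scope.

(* Let R* solve the normal equations of linear least squares on X~.  Give every hidden
   neuron the affine map x |-> R* x~ shifted by a bias K so large that all preactivations
   exceed 1, read out only the first neuron (weight 1/s+) and undo the shift with b2.  Near
   this point all preactivations stay nonnegative, where h is multiplication by s+, so the
   network is affine in x and its risk is at least the least-squares risk, which it
   attains: a local minimum for every large K.  It is not global: the residual
   R* X~ - Y is nonzero and orthogonal to every affine feature of the data, yet, the data
   points being distinct, some ReLU feature max(w.x - c, 0) is correlated with it; since
   s+ <> s- so is h(w.x - c), and feeding this feature through a second neuron with a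
   suitable output weight lowers the risk. *)

Lemma frob2_row (R : realType) m (M : 'rV[R]_m) : frob2 M = \sum_j M 0 j ^+ 2.
Proof. by rewrite /frob2 big_ord1. Qed.

Lemma mulmx_trmx_rowE (R : realType) m (u v : 'rV[R]_m) :
  (u *m v^T) 0 0 = \sum_j u 0 j * v 0 j.
Proof. by rewrite mxE; apply: eq_bigr => j _; rewrite mxE. Qed.

Lemma mulmx_trmx_self_eq0 (R : realType) m (u : 'rV[R]_m) : u *m u^T = 0 -> u = 0.
Proof.
move=> /(congr1 (fun M : 'M[R]_1 => M 0 0)); rewrite mulmx_trmx_rowE mxE => sum0.
apply/matrixP => i j; rewrite (ord1 i) mxE.
apply/eqP; rewrite -[_ == 0]orbb -mulf_eq0; apply/eqP/(psumr_eq0P _ sum0) => // k _.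
by rewrite -expr2 sqr_ge0.
Qed.

Section LeastSquares.
Variables (R : realType) (n m : nat) (A : 'M[R]_(n, m)) (Y : 'rV[R]_m).

(* The row space of A A^T is that of A^T: u A A^T = 0 forces (u A) (u A)^T = 0. *)
Lemma lsq_normal_solution : exists Rs : 'rV_n, (Rs *m A - Y) *m A^T = 0.
Proof.
have capA0 : (A :&: kermx A^T)%MS = 0.
  apply/row_matrixP => i; rewrite row0.
  have := row_sub i (A :&: kermx A^T)%MS.
  rewrite sub_capmx => /andP[/submxP[w ->] /sub_kermxP hk].
  by apply: mulmx_trmx_self_eq0; rewrite trmx_mul mulmxA hk mul0mx.
have rkAAt : \rank (A *m A^T) = \rank A^T.
  by have := mxrank_mul_ker A A^T; rewrite capA0 mxrank0 addn0 mxrank_tr.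
have eqAAt : (A *m A^T == A^T)%MS.
  by case: (mxrank_leqif_eq (submxMl A A^T)) => _ <-; rewrite rkAAt.
have : (Y *m A^T <= A *m A^T)%MS by rewrite (eqmxP eqAAt) submxMl.
by case/submxP => D YAt; exists D; rewrite mulmxBl -mulmxA -YAt subrr.
Qed.

Lemma lsq_normal_min (Rs : 'rV_n) : (Rs *m A - Y) *m A^T = 0 ->
  forall Rm, frob2 (Rs *m A - Y) <= frob2 (Rm *m A - Y).
Proof.
move=> normal Rm; set E := Rs *m A - Y; set D := (Rm - Rs) *m A.
have -> : Rm *m A - Y = D + E by rewrite /D /E mulmxBl addrA subrK.
have DE0 : \sum_j D 0 j * E 0 j = 0.
  have AEt0 : A *m E^T = 0 by rewrite -[A]trmxK -trmx_mul normal trmx0.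
  by rewrite -mulmx_trmx_rowE /D -mulmxA AEt0 mulmx0 mxE.
rewrite !frob2_row.
have -> : \sum_j (D + E) 0 j ^+ 2
   = \sum_j D 0 j ^+ 2 + (\sum_j D 0 j * E 0 j) *+ 2 + \sum_j E 0 j ^+ 2.
  rewrite -sumrMnl -!big_split /=; apply: eq_bigr => j _.
  by rewrite mxE sqrrD.
by rewrite DE0 mul0rn addr0 lerDr; apply: sumr_ge0 => j _; apply: sqr_ge0.
Qed.

End LeastSquares.

Lemma exists_ge_notin (R : realType) (s : seq R) (K0 : R) :
  exists2 K, K0 <= K & K \notin s.
Proof.
pose K := Num.max K0 (\big[Num.max/0]_(x <- s) x + 1).
exists K; first by rewrite le_max lexx.
apply/negP => Ks; have := le_bigmax_seq 0 _ predT id Ks isT.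
rewrite /= ge_max => /andP[_]; lra.
Qed.

Lemma exists_lt_gap (R : realType) (I : finType) (P : pred I) (f : I -> R) (b : R) :
  (forall i, P i -> f i < b) -> exists2 c, c < b & forall i, P i -> f i < c.
Proof.
move=> fb; case: (pickP P) => [i0 Pi0 | P0]; last first.
  by exists (b - 1) => [|i]; rewrite ?P0 // gtrBl ltr01.
case: (arg_maxP f Pi0) => k Pk kmax; have [fk_lt lt_b] := midf_lt (fb k Pk).
by exists ((f k + b) / 2) => // i Pi; apply: le_lt_trans (kmax i Pi) fk_lt.
Qed.

Lemma col_dot_lt_sqnorm (R : realType) n m (X : 'M[R]_(n, m)) (j j0 : 'I_m) :
  col j X != col j0 X -> \sum_i X i j ^+ 2 <= \sum_i X i j0 ^+ 2 ->
  \sum_i X i j0 * X i j < \sum_i X i j0 ^+ 2.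
Proof.
move=> Xjj0 nrm_le.
have [i Xij] : exists i, X i j != X i j0.
  apply/existsP; apply: contraR Xjj0 => /existsPn Xeq; apply/eqP/matrixP => i k.
  by rewrite (ord1 k) !mxE; apply/eqP; rewrite -[_ == _]negbK Xeq.
have dist_gt0 : 0 < \sum_k (X k j - X k j0) ^+ 2.
  rewrite (bigD1 i) //= ltr_pwDl ?sumr_ge0 // => [|k _]; last exact: sqr_ge0.
  by rewrite lt_def sqr_ge0 andbT sqrf_eq0 subr_eq0.
have dist_expand : \sum_k (X k j - X k j0) ^+ 2
    = \sum_k X k j ^+ 2 + \sum_k X k j0 ^+ 2 - (\sum_k X k j0 * X k j) *+ 2.
  by rewrite -sumrMnl -big_split -sumrB /=; apply: eq_bigr => k _; ring.
rewrite dist_expand mulr2n in dist_gt0; lra.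
Qed.

(* The data point of largest norm among those where d does not vanish can be cut off from
   all the other ones by a hyperplane orthogonal to it, so the ReLU of that affine function
   sees d at that single point. *)
Lemma exists_relu_feature_corr_neq0 (R : realType) dx m (X : 'M[R]_(dx, m)) (d : 'rV[R]_m) :
  (forall i j : 'I_m, col i X = col j X -> i = j) -> d != 0 ->
  exists (w : 'rV[R]_dx) (c : R),
    \sum_j d 0 j * Num.max (\sum_i w 0 i * X i j - c) 0 != 0.
Proof.
move=> Xinj d_neq0; have [j1 dj1] : exists j, d 0 j != 0.
  apply/existsP; apply: contraR d_neq0 => /existsPn d0; apply/eqP/matrixP => i j.
  by rewrite (ord1 i) mxE; apply/eqP; rewrite -[_ == _]negbK d0.
pose nrm j := \sum_i X i j ^+ 2.
case: (arg_maxP nrm (P := fun j => d 0 j != 0) dj1) => j0 dj0 j0max.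
pose u j := \sum_i X i j0 * X i j.
have u_lt j : (d 0 j != 0) && (j != j0) -> u j < nrm j0.
  case/andP=> dj jj0; apply: col_dot_lt_sqnorm; last exact: j0max.
  by apply: contra jj0 => /eqP/Xinj ->.
have [c c_lt u_lt_c] := exists_lt_gap u_lt.
exists (\row_i X i j0), c.
under eq_bigr => j _ do [under eq_bigr do rewrite mxE; rewrite -/(u j)].
rewrite (bigD1 j0) //= big1 ?addr0 => [|j jj0]; last first.
  have [->|dj] := eqVneq (d 0 j) 0; first by rewrite mul0r.
  by rewrite max_r ?mulr0 // subr_le0 ltW // u_lt_c ?dj.
rewrite max_l; last by rewrite subr_ge0 ltW //; under eq_bigr do rewrite -expr2.
by rewrite mulf_neq0 // subr_eq0 gt_eqF //; under eq_bigr do rewrite -expr2.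
Qed.

Lemma exists_sumsq_descent (R : realType) (I : finType) (d g : I -> R) :
  \sum_j d j * g j != 0 -> exists mu, \sum_j (d j + mu * g j) ^+ 2 < \sum_j d j ^+ 2.
Proof.
set nu := \sum_j d j * g j => nu_neq0; pose G := \sum_j g j ^+ 2.
have G_gt0 : 0 < G.
  rewrite lt_def sumr_ge0 ?andbT => [|j _]; last exact: sqr_ge0.
  apply: contra nu_neq0 => /eqP G0; apply/eqP/big1 => j _.
  have : g j ^+ 2 == 0 by apply/eqP/(psumr_eq0P _ G0) => // k _; apply: sqr_ge0.
  by rewrite sqrf_eq0 => /eqP ->; rewrite mulr0.
exists (- (nu / G)); set mu := - (nu / G).
have -> : \sum_j (d j + mu * g j) ^+ 2 = \sum_j d j ^+ 2 + ((mu * nu) *+ 2 + mu ^+ 2 * G).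
  rewrite /nu /G !mulr_sumr -sumrMnl -!big_split /=.
  by apply: eq_bigr => j _; ring.
have -> : (mu * nu) *+ 2 + mu ^+ 2 * G = - (nu ^+ 2 / G) by rewrite /mu; field; rewrite gt_eqF.
by rewrite gtrDl oppr_lt0 divr_gt0 // lt_def sqr_ge0 sqrf_eq0 nu_neq0.
Qed.

Lemma leaky_ge0 (R : realType) (sp sm z : R) : 0 <= sp -> 0 <= sm -> 0 <= z ->
  leaky sp sm z = sp * z.
Proof. by move=> *; rewrite /leaky max_l ?min_r ?mulr_ge0 // addr0. Qed.

Lemma leakyE (R : realType) (sp sm z : R) : 0 <= sp -> 0 <= sm ->
  leaky sp sm z = sm * z + (sp - sm) * Num.max z 0.
Proof.
move=> sp_ge0 sm_ge0; have [z_ge0|z_lt0] := leP 0 z.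
  by rewrite leaky_ge0 //; ring.
rewrite /leaky max_r ?min_l ?mulr0 ?addr0 ?add0r //.
all: by rewrite mulr_ge0_le0 // ltW.
Qed.

Lemma riskE (R : realType) dx d1 m (h : R -> R) (X : 'M[R]_(dx, m)) (Y : 'rV[R]_m)
    (W1 : 'M[R]_(d1, dx)) W2 b1 b2 :
  risk h X Y (W1, W2, b1, b2) = 2^-1 * \sum_j
    (\sum_k W2 0 k * h (\sum_i W1 k i * X i j + b1 k 0) + b2 0 0 - Y 0 j) ^+ 2.
Proof.
rewrite /risk frob2_row; congr (_ * _); apply: eq_bigr => j _.
rewrite !mxE big_ord1 mxE mulr1; congr ((_ + _ - _) ^+ 2).
apply: eq_bigr => k _; rewrite !mxE big_ord1 mxE mulr1.
by congr (_ * h (_ + _)); apply: eq_bigr => i _; rewrite mxE.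
Qed.

Lemma preactE (R : realType) dx d1 m (X : 'M[R]_(dx, m)) (W1 : 'M[R]_(d1, dx))
    (b1 : 'cV[R]_d1) k j :
  (W1 *m X + b1 *m const_mx 1) k j = \sum_i W1 k i * X i j + b1 k 0.
Proof. by rewrite !mxE big_ord1 mxE mulr1. Qed.

Lemma mul_row_XtildeE (R : realType) dx m (X : 'M[R]_(dx, m)) (a : 'rV[R]_dx)
    (b : 'M[R]_1) j :
  (row_mx a b *m Xtilde X) 0 j = \sum_i a 0 i * X i j + b 0 0.
Proof. by rewrite /Xtilde mul_row_col !mxE big_ord1 !mxE mulr1. Qed.

Section LeakyNetwork.
Variables (R : realType) (dx m : nat) (X : 'M[R]_(dx, m)) (Y : 'rV[R]_m) (sp sm : R).
Hypotheses (sp_gt0 : 0 < sp) (sm_ge0 : 0 <= sm).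

Local Notation h := (leaky sp sm).
Local Notation preact W1 b1 := (W1 *m X + b1 *m const_mx 1).

Lemma risk_nonneg_preact d1 (W1 : 'M[R]_(d1, dx)) W2 (b1 : 'cV[R]_d1) b2 :
    (forall k j, 0 <= preact W1 b1 k j) ->
  risk h X Y (W1, W2, b1, b2) =
    2^-1 * frob2 (row_mx (sp *: (W2 *m W1)) (sp *: (W2 *m b1) + b2) *m Xtilde X - Y).
Proof.
rewrite /risk => pre_ge0; have -> : map_mx h (preact W1 b1) = sp *: preact W1 b1.
  by apply/matrixP => k j; rewrite [LHS]mxE [RHS]mxE leaky_ge0 // ltW.
rewrite /Xtilde mul_row_col -scalemxAr mulmxDr scalerDr !mulmxA mulmxDl.
by rewrite -!scalemxAl addrA.
Qed.

Variable Rs : 'rV[R]_(dx + 1).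
Hypothesis normal_eq : (Rs *m Xtilde X - Y) *m (Xtilde X)^T = 0.

Local Notation lsq_risk := (2^-1 * frob2 (Rs *m Xtilde X - Y)).

Lemma is_lsq_min_normal : is_lsq_min X Y lsq_risk.
Proof.
split; last by exists Rs.
by move=> Rm; rewrite ler_wpM2l ?invr_ge0 ?ler0n // lsq_normal_min.
Qed.

Lemma lsq_risk_le_nonneg_preact d1 (W1 : 'M[R]_(d1, dx)) W2 (b1 : 'cV[R]_d1) b2 :
  (forall k j, 0 <= preact W1 b1 k j) -> lsq_risk <= risk h X Y (W1, W2, b1, b2).
Proof.
move=> pre_ge0; rewrite risk_nonneg_preact //.
by rewrite ler_wpM2l ?invr_ge0 ?ler0n // lsq_normal_min.
Qed.

Local Notation r := (lsubmx Rs).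
Local Notation beta := (rsubmx Rs 0 0).

Lemma Rs_XtildeE j : (Rs *m Xtilde X) 0 j = \sum_i r 0 i * X i j + beta.
Proof. by rewrite -{1}(hsubmxK Rs) mul_row_XtildeE. Qed.

Definition collapse_threshold : R := 1 + \sum_j `|\sum_i r 0 i * X i j|.

Lemma collapse_threshold_le K j :
  collapse_threshold <= K -> 1 <= \sum_i r 0 i * X i j + K.
Proof.
rewrite /collapse_threshold (bigD1 j) //= => K_ge.
have := ler_norm (- (\sum_i r 0 i * X i j)); rewrite normrN.
have : 0 <= \sum_(k | k != j) `|\sum_i r 0 i * X i k| by apply: sumr_ge0.
lra.
Qed.

Definition collapsed d K : params R dx d.+1 1 :=
  (\matrix_(k, i) r 0 i, \row_k (if k == ord0 then sp^-1 else 0),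
   const_mx K, const_mx (beta - K)).

Lemma risk_collapsed d K : collapse_threshold <= K -> risk h X Y (collapsed d K) = lsq_risk.
Proof.
move=> K_ge; rewrite risk_nonneg_preact => [|k j]; last first.
  rewrite preactE mxE; under eq_bigr do rewrite mxE.
  exact: le_trans ler01 (collapse_threshold_le j K_ge).
have W2E n (M : 'M[R]_(d.+1, n)) : \row_k (if k == ord0 then sp^-1 else 0) *m M
                                  = sp^-1 *: row ord0 M.
  apply/matrixP => i j; rewrite (ord1 i) !mxE big_ord_recl big1 ?addr0 => [|k _].
    by rewrite mxE eqxx.
  by rewrite mxE eq_sym (negbTE (neq_lift _ _)) mul0r.
congr (_ * frob2 (_ *m _ - Y)); rewrite -[RHS](hsubmxK Rs) !W2E !scalerA mulfV ?gt_eqF //.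
rewrite !scale1r; congr row_mx; apply/matrixP => i j; rewrite (ord1 i) ?(ord1 j) !mxE //.
by rewrite addrC subrK.
Qed.

Local Notation data_l1 := (\sum_j \sum_i `|X i j|).

(* A perturbation of size eps moves each preactivation by at most eps (1 + data_l1) = 1. *)
Lemma near_collapsed_nonneg_preact d K (W1 : 'M[R]_(d.+1, dx)) W2 b1 b2 :
    collapse_threshold <= K ->
    params_near (1 + data_l1)^-1 (collapsed d K) (W1, W2, b1, b2) ->
  forall k j, 0 <= preact W1 b1 k j.
Proof.
set eps := (1 + data_l1)^-1 => K_ge [W1_near _ b1_near _] k j.
have l1_ge0 : 0 <= data_l1 by do 2![apply: sumr_ge0 => ? _]; apply: normr_ge0.
have eps_ge0 : 0 <= eps by rewrite invr_ge0; lra.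
have eps_l1 : eps + eps * data_l1 = 1 by rewrite -{1}(mulr1 eps) -mulrDr mulVf //; lra.
have W1_dev : `|\sum_i (W1 k i - r 0 i) * X i j| <= eps * data_l1.
  apply: le_trans (ler_norm_sum _ _ _) _; apply: le_trans (_ : eps * \sum_i `|X i j| <= _).
    rewrite mulr_sumr; apply: ler_sum => i _; rewrite normrM ler_wpM2r // ltW // distrC.
    by have := W1_near k i; rewrite mxE.
  by rewrite ler_wpM2l // (bigD1 j) //= lerDl sumr_ge0 // => ? _; apply: sumr_ge0.
have b1_dev : `|b1 k 0 - K| < eps by rewrite distrC; have := b1_near k 0; rewrite mxE.
have pre_split : \sum_i W1 k i * X i j + b1 k 0 = \sum_i r 0 i * X i j + K
    + \sum_i (W1 k i - r 0 i) * X i j + (b1 k 0 - K).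
  by under [X in _ = _ + X + _]eq_bigr do rewrite mulrBl; rewrite sumrB; ring.
rewrite preactE pre_split.
have := collapse_threshold_le j K_ge.
have := ler_norm (- (\sum_i (W1 k i - r 0 i) * X i j)); rewrite normrN.
have := ler_norm (- (b1 k 0 - K)); rewrite normrN.
lra.
Qed.

Lemma collapsed_local_min d K : collapse_threshold <= K ->
  is_local_min (@params_near R dx d.+1 1) (risk h X Y) (collapsed d K).
Proof.
move=> K_ge; exists (1 + data_l1)^-1.
  by rewrite invr_gt0 ltr_pwDl // sumr_ge0 // => ? _; apply: sumr_ge0 => ? _.
move=> [[[W1 W2] b1] b2] near; rewrite risk_collapsed //.
exact/lsq_risk_le_nonneg_preact/(near_collapsed_nonneg_preact K_ge near).
Qed.

Lemma exists_risk_lt_lsq n :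
    ~ (exists Rm : 'M[R]_(1, dx + 1), Y = Rm *m Xtilde X) ->
    (forall i j : 'I_m, col i X = col j X -> i = j) -> sp != sm ->
  exists q : params R dx n.+2 1, risk h X Y q < lsq_risk.
Proof.
move=> Y_nonlin Xinj sp_neq_sm; set res := Rs *m Xtilde X - Y.
have res_neq0 : res != 0.
  apply/eqP => res0; apply: Y_nonlin; exists Rs.
  by apply/eqP; rewrite eq_sym -subr_eq0 -/res res0.
have [w [c corr_relu]] := exists_relu_feature_corr_neq0 Xinj res_neq0.
pose a j := \sum_i w 0 i * X i j - c.
have res_orth : \sum_j res 0 j * a j = 0.
  have aE j : a j = (row_mx w (const_mx (- c)) *m Xtilde X) 0 j.
    by rewrite mul_row_XtildeE mxE.
  under eq_bigr do rewrite aE.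
  by rewrite -mulmx_trmx_rowE trmx_mul mulmxA normal_eq mul0mx mxE.
have corr_leaky : \sum_j res 0 j * h (a j) != 0.
  have -> : \sum_j res 0 j * h (a j)
      = sm * \sum_j res 0 j * a j + (sp - sm) * \sum_j res 0 j * Num.max (a j) 0.
    rewrite !mulr_sumr -big_split; apply: eq_bigr => j _ /=.
    by rewrite leakyE //; [ring | exact: ltW].
  by rewrite res_orth mulr0 add0r mulf_neq0 // subr_eq0.
have [mu descent] := exists_sumsq_descent corr_leaky.
pose K := collapse_threshold.
pose W1 : 'M_(n.+2, dx) := \matrix_(k, i) (if k == ord0 then r 0 i else w 0 i).
pose W2 : 'rV_n.+2 := \row_k (if k == ord0 then sp^-1 else if val k == 1%N then mu else 0).
pose b1 : 'cV_n.+2 := \col_k (if k == ord0 then K else - c).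
exists (W1, W2, b1, const_mx (beta - K)).
rewrite riskE frob2_row ltr_pM2l ?invr_gt0 ?ltr0n //.
apply: le_lt_trans descent; rewrite le_eqVlt; apply/orP; left; apply/eqP.
apply: eq_bigr => j _; congr (_ ^+ 2).
rewrite [\sum_(k < n.+2) _]big_ord_recl [\sum_(k < n.+1) _]big_ord_recl.
rewrite [\sum_(k < n) _]big1 ?addr0 => [|k _]; last by rewrite !mxE /= mul0r.
have W1_0 : \sum_i W1 ord0 i * X i j = \sum_i r 0 i * X i j.
  by apply: eq_bigr => i _; rewrite mxE.
have W1_1 : \sum_i W1 (lift ord0 ord0) i * X i j = \sum_i w 0 i * X i j.
  by apply: eq_bigr => i _; rewrite mxE.
rewrite W1_0 W1_1 [res 0 j]mxE Rs_XtildeE !mxE /= leaky_ge0 ?(ltW sp_gt0) //.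
  by rewrite mulrA mulVf ?gt_eqF //; ring.
exact: le_trans ler01 (collapse_threshold_le j (lexx K)).
Qed.

End LeakyNetwork.

Theorem theorem1 (R : realType) (dx d1 m : nat)
    (X : 'M[R]_(dx, m)) (Y : 'M[R]_(1, m)) (sp sm : R)
    (hY : ~ exists Rm : 'M[R]_(1, dx + 1), Y = Rm *m Xtilde X)
    (hX : forall i j : 'I_m, col i X = col j X -> i = j)
    (hsp : 0 < sp) (hsm : 0 <= sm) (hs : sp != sm)
    (hd1 : (2 <= d1)%N) :
  let P := fun p : params R dx d1 1 =>
    is_spurious_local_min (@params_near R dx d1 1)
      (risk (leaky sp sm) X Y) p /\
    is_lsq_min X Y (risk (leaky sp sm) X Y p) in
  (exists p, P p) /\
  (forall s : seq (params R dx d1 1), exists p, P p /\ p \notin s).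
Proof.
case: d1 hd1 => [|[|n]] // _ P.
have [Rs normal] := lsq_normal_solution (Xtilde X) Y.
pose K0 := collapse_threshold X Rs.
have P_collapsed K : K0 <= K -> P (collapsed sp Rs n.+1 K).
  move=> K_ge; rewrite /P risk_collapsed //; split; last exact: is_lsq_min_normal.
  split; first exact: collapsed_local_min.
  have [q q_lt] := exists_risk_lt_lsq hsp hsm normal n hY hX hs.
  by exists q; rewrite risk_collapsed.
split; first by exists (collapsed sp Rs n.+1 K0); apply: P_collapsed.
move=> s; pose b1_0 (q : params R dx n.+2 1) := q.1.2 ord0 ord0.
have [K K_ge K_notin] := exists_ge_notin (map b1_0 s) K0.
exists (collapsed sp Rs n.+1 K); split; first exact: P_collapsed.
apply: contraNN K_notin => K_in; apply/mapP.
by exists (collapsed sp Rs n.+1 K); rewrite // /b1_0 /= mxE.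
Qed.
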